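(* Let $m,n\in\mathbb{N}$ be coprime with $1\le m\le n-1$, and let $\Gamma$ be a $\mathbb{D}_n$-symmetric billiard curve with equivariant parametrization $\gamma$. Let $Z\in\Gamma^{\mathbb{Z}}$ be an $n$-periodic billiard sequence of rotation number $\frac mn$ with lift $X\in\Sigma$, and suppose every rotation in $\mathbb{Z}_n=\langle R\rangle$ is a spatiotemporal symmetry of $Z$. Then: - $Z$ is Birkhoff, $Z_i=R^{mi}(Z_0)$, and $X_i=X_0+\frac mni$ for all $i$; - the segment length $\|Z_{i+1}-Z_i\|$ and the curvature $\kappa(Z_i)$ are independent of $i$; - if moreover $Z$ is a billiard orbit, then $\theta_i:=\tfrac12\angle(Z_{i+1}-Z_i,\,Z_i-Z_{i-1})=\frac{m\pi}{n}$ for all $i$.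
   Context: $\mathbb{D}_n=\langle R,S\rangle$, where $R$ is counterclockwise rotation by $2\pi/n$ and $S$ is the horizontal reflection. $\Gamma$ is a $C^2$ simple closed $\mathbb{D}_n$-invariant curve bounding a strictly convex domain, parametrized counterclockwise by a $1$-periodic $C^2$ immersion $\gamma$ descending to an embedding of $\mathbb{R}/\mathbb{Z}$, with $\gamma(x+1/n)=R\gamma(x)$ and $\gamma(-x)=S\gamma(x)$. A billiard sequence has $Z_i\ne Z_{i+1}$, with lift $X\in\Sigma=\{0<X_{i+1}-X_i<1\}$, $\gamma(X_i)=Z_i$. The rotation number is $\lim X_i/i$. $h$ is a spatiotemporal symmetry of $Z$ if there is $k$ with $h(Z_i)=Z_{k+i}$ for all $i$ or $h(Z_i)=Z_{k-i}$ for all $i$. Birkhoff means the lift satisfies $X_i\le X_j+l\Rightarrow X_{i+m}\le X_{j+m}+l$ for all integers. A billiard orbit is a billiard sequence satisfying the reflection law at each point. $\kappa$ is the curvature of $\Gamma$. *)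

From Stdlib Require Import Reals ZArith Arith.
From Coquelicot Require Import Coquelicot.
Open Scope R_scope.

Definition pt := (R * R)%type.

Definition padd (p q : pt) : pt := (fst p + fst q, snd p + snd q).
Definition psub (p q : pt) : pt := (fst p - fst q, snd p - snd q).
Definition pscale (a : R) (p : pt) : pt := (a * fst p, a * snd p).
Definition dot (p q : pt) : R := fst p * fst q + snd p * snd q.
Definition det2 (p q : pt) : R := fst p * snd q - snd p * fst q.
Definition pnorm (p : pt) : R := sqrt (dot p p).
Definition pdist (p q : pt) : R := pnorm (psub p q).
Definition unitv (p : pt) : pt := pscale (/ pnorm p) p.

Definition rot (a : R) (p : pt) : pt :=
  (cos a * fst p - sin a * snd p, sin a * fst p + cos a * snd p).

Definition Rgen (n : nat) : pt -> pt := rot (2 * PI / INR n).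
Definition Rpow (n : nat) (k : Z) : pt -> pt := rot (IZR k * (2 * PI / INR n)).
Definition Sref (p : pt) : pt := (fst p, - snd p).

Definition interior (K : pt -> Prop) (p : pt) : Prop :=
  exists eps, 0 < eps /\ forall q, pdist p q < eps -> K q.
Definition boundary (K : pt -> Prop) (p : pt) : Prop :=
  forall eps, 0 < eps ->
    (exists q, K q /\ pdist p q < eps) /\ (exists q, ~ K q /\ pdist p q < eps).
Definition strictly_convex (K : pt -> Prop) : Prop :=
  forall p q t, K p -> K q -> p <> q -> 0 < t < 1 ->
    interior K (padd (pscale (1 - t) p) (pscale t q)).

Definition d1 (g : R -> pt) (x : R) : pt :=
  (Derive (fun s => fst (g s)) x, Derive (fun s => snd (g s)) x).
Definition d2 (g : R -> pt) (x : R) : pt :=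
  (Derive_n (fun s => fst (g s)) 2 x, Derive_n (fun s => snd (g s)) 2 x).

Definition C2 (f : R -> R) : Prop :=
  (forall x, ex_derive f x) /\ (forall x, ex_derive (Derive f) x) /\
  (forall x, continuous (Derive_n f 2) x).

Definition curv (g : R -> pt) (x : R) : R :=
  det2 (d1 g x) (d2 g x) / (pnorm (d1 g x)) ^ 3.

Definition onCurve (g : R -> pt) (p : pt) : Prop := exists x, g x = p.

Definition billiard_curve (g : R -> pt) : Prop :=
  C2 (fun s => fst (g s)) /\ C2 (fun s => snd (g s)) /\
  (forall x, d1 g x <> (0, 0)) /\
  (forall x, g (x + 1) = g x) /\
  (forall x y, g x = g y -> exists k : Z, y = x + IZR k) /\
  exists K : pt -> Prop,
    strictly_convex K /\
    (forall p, boundary K p <-> onCurve g p) /\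
    (* counterclockwise: the domain lies to the left of the velocity *)
    (forall x p, interior K p -> det2 (d1 g x) (psub p (g x)) > 0).

Definition Dn_equivariant (n : nat) (g : R -> pt) : Prop :=
  (forall x, g (x + / INR n) = Rgen n (g x)) /\
  (forall x, g (- x) = Sref (g x)).

Definition billiard_seq_lift (g : R -> pt) (Zs : Z -> pt) (X : Z -> R) : Prop :=
  (forall i, Zs i <> Zs (i + 1)%Z) /\
  (forall i, 0 < X (i + 1)%Z - X i < 1) /\
  (forall i, g (X i) = Zs i).

Definition rotation_number (X : Z -> R) (rho : R) : Prop :=
  is_lim_seq (fun k : nat => X (Z.of_nat k) / INR k) rho.

Definition spatiotemporal_symmetry (h : pt -> pt) (Zs : Z -> pt) : Prop :=
  exists k : Z, (forall i, h (Zs i) = Zs (k + i)%Z) \/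
                (forall i, h (Zs i) = Zs (k - i)%Z).

Definition Birkhoff (X : Z -> R) : Prop :=
  forall i j l m : Z, X i <= X j + IZR l -> X (i + m)%Z <= X (j + m)%Z + IZR l.

(* reflection law at each point: the unit incoming and outgoing directions
   make the same angle with the tangent vector, i.e. the outgoing direction
   is the mirror image of the incoming one in the tangent line *)
Definition billiard_orbit (g : R -> pt) (Zs : Z -> pt) (X : Z -> R) : Prop :=
  forall i,
    dot (unitv (psub (Zs i) (Zs (i - 1)%Z))) (d1 g (X i)) =
    dot (unitv (psub (Zs (i + 1)%Z) (Zs i))) (d1 g (X i)).

Definition is_ccw_angle (v w : pt) (phi : R) : Prop :=
  0 <= phi < 2 * PI /\ unitv w = rot phi (unitv v).

(* The equivariance g(x + 1/n) = R g(x) turns the symmetry R of Z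
   into a relation between lifts: two lifts in Sigma whose values differ by
   integers differ by a constant, so R acts on the lift X either as a
   translation X_(i+k) = X_i + c or as a reflection X_(k-i) = X_i + c - i, with
   c = 1/n mod 1.  Together with the period X_(i+n) = X_i + m (read off from the
   rotation number), Bezout turns a translation into the uniform step
   X_(i+1) = X_i + m/n; a reflection forces n = 2m, hence (m, n) = (1, 2), and
   again the uniform step.  Then Z_(i+1) = R^m Z_i, and every remaining claim
   follows from the invariance of distances, angles and curvature under the
   rotation R^m. *)
From Pilot Require Import Defs.
From Stdlib Require Import Reals ZArith Arith Lra Lia.
From Coquelicot Require Import Coquelicot.
Open Scope R_scope.

Lemma rot_add a b p : rot a (rot b p) = rot (a + b) p.
Proof.
destruct p; unfold rot; simpl; rewrite cos_plus, sin_plus; f_equal; ring.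
Qed.

Lemma rot_0 p : rot 0 p = p.
Proof. destruct p; unfold rot; simpl; rewrite cos_0, sin_0; f_equal; ring. Qed.

Lemma cos2_sin2 b : cos b * cos b + sin b * sin b = 1.
Proof. rewrite <- (sin2_cos2 b); unfold Rsqr; ring. Qed.

Lemma dot_rot b p q : dot (rot b p) (rot b q) = dot p q.
Proof.
destruct p as [x y], q as [x' y']; unfold dot, rot; simpl.
transitivity ((cos b * cos b + sin b * sin b) * (x * x' + y * y')); [ring|].
rewrite cos2_sin2; ring.
Qed.

Lemma det2_rot b p q : det2 (rot b p) (rot b q) = det2 p q.
Proof.
destruct p as [x y], q as [x' y']; unfold det2, rot; simpl.
transitivity ((cos b * cos b + sin b * sin b) * (x * y' - y * x')); [ring|].
rewrite cos2_sin2; ring.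
Qed.

Lemma pnorm_rot b p : pnorm (rot b p) = pnorm p.
Proof. unfold pnorm; rewrite dot_rot; reflexivity. Qed.

Lemma psub_rot b p q : psub (rot b p) (rot b q) = rot b (psub p q).
Proof. destruct p, q; unfold psub, rot; simpl; f_equal; ring. Qed.

Lemma pdist_rot b p q : pdist (rot b p) (rot b q) = pdist p q.
Proof. unfold pdist; rewrite psub_rot, pnorm_rot; reflexivity. Qed.

Lemma unitv_rot b p : unitv (rot b p) = rot b (unitv p).
Proof.
unfold unitv; rewrite pnorm_rot.
destruct p; unfold pscale, rot; simpl; f_equal; ring.
Qed.

Lemma Rpow_add n a b p : Rpow n (a + b) p = Rpow n a (Rpow n b p).
Proof. unfold Rpow; rewrite rot_add, plus_IZR; f_equal; ring. Qed.

Lemma is_ccw_angle_rot v phi :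
  0 <= phi < 2 * PI -> is_ccw_angle v (rot phi v) phi.
Proof. intros Hphi; split; [exact Hphi | apply unitv_rot]. Qed.

Lemma translate_iter (Y : Z -> R) s c :
  (forall i, Y (i + s)%Z = Y i + c) ->
  forall j i, Y (i + j * s)%Z = Y i + IZR j * c.
Proof.
intros Hs j; induction j as [|j IH|j IH] using Z.peano_ind; intros i.
- rewrite Z.mul_0_l, Z.add_0_r; simpl; ring.
- replace (i + Z.succ j * s)%Z with (i + j * s + s)%Z by lia.
  rewrite Hs, IH, succ_IZR; ring.
- specialize (Hs (i + Z.pred j * s)%Z).
  replace (i + Z.pred j * s + s)%Z with (i + j * s)%Z in Hs by lia.
  rewrite IH in Hs.
  replace (IZR (Z.pred j)) with (IZR j - 1) by (rewrite <- Z.sub_1_r, minus_IZR; reflexivity).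
  lra.
Qed.

(* The integer-valued difference Y - X changes by less than 1 at each step. *)
Lemma integer_gap_const (X Y : Z -> R) :
  (forall i, 0 < X (i + 1)%Z - X i < 1) ->
  (forall i, 0 < Y (i + 1)%Z - Y i < 1) ->
  (forall i, exists z, Y i - X i = IZR z) ->
  forall i, Y i = X i + (Y 0%Z - X 0%Z).
Proof.
intros HX HY Hint.
assert (Hsucc : forall i, Y (i + 1)%Z - X (i + 1)%Z = Y i - X i + 0).
{ intros i.
  destruct (Hint i) as [a Ha], (Hint (i + 1)%Z) as [b Hb].
  assert (Hab : (-1 < b - a < 1)%Z).
  { specialize (HX i); specialize (HY i).
    split; apply lt_IZR; rewrite minus_IZR; simpl; lra. }
  replace b with a in Hb by lia; lra. }
intros i.
pose proof (translate_iter (fun i => Y i - X i) 1 0 Hsucc i 0%Z) as Hi.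
rewrite Z.add_0_l, Z.mul_1_r in Hi; simpl in Hi; lra.
Qed.

Lemma rotation_number_of_period (X : Z -> R) (n : nat) (p rho : R) :
  (0 < n)%nat -> (forall i, X (i + Z.of_nat n)%Z = X i + p) ->
  rotation_number X rho -> rho = p / INR n.
Proof.
intros Hn Hp Hrho.
assert (Hn' : 0 < INR n) by (apply lt_0_INR; exact Hn).
assert (Hsub := is_lim_seq_subseq _ _ (fun k => (n * S k)%nat)
  ltac:(intros P [N HN]; exists N; intros k Hk; apply HN; nia) Hrho).
assert (Hval : forall k, X (Z.of_nat (n * S k)) / INR (n * S k) =
                         X 0%Z / INR n * / INR (S k) + p / INR n).
{ intros k.
  pose proof (translate_iter X _ _ Hp (Z.of_nat (S k)) 0%Z) as Hk.
  replace (0 + Z.of_nat (S k) * Z.of_nat n)%Z with (Z.of_nat (n * S k)) in Hk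
    by lia.
  rewrite Hk, <- INR_IZR_INZ, mult_INR.
  assert (0 < INR (S k)) by (apply lt_0_INR; lia).
  field; lra. }
assert (Hlim : is_lim_seq (fun k => X 0%Z / INR n * / INR (S k) + p / INR n)
                          (X 0%Z / INR n * 0 + p / INR n)).
{ apply is_lim_seq_plus'; [|apply is_lim_seq_const].
  apply (is_lim_seq_scal_l _ _ (Finite 0)).
  apply (is_lim_seq_inv _ p_infty); [|discriminate].
  apply (is_lim_seq_incr_1 INR p_infty), is_lim_seq_INR. }
apply (is_lim_seq_ext _ _ _ Hval), is_lim_seq_unique in Hsub.
apply is_lim_seq_unique in Hlim.
rewrite Hsub in Hlim; injection Hlim; intros ->; ring.
Qed.

Lemma translation_uniform_step (X : Z -> R) (k q : Z) (m n : nat) c :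
  (0 < n)%nat ->
  (forall i, X (i + k)%Z = X i + c) ->
  (forall i, X (i + Z.of_nat n)%Z = X i + INR m) ->
  c = / INR n + IZR q ->
  forall i, X (i + 1)%Z = X i + INR m / INR n.
Proof.
intros Hn Hk Hper Hc.
assert (Hn' : 0 < INR n) by (apply lt_0_INR; exact Hn).
assert (Hbezout : (Z.of_nat n * q + 1 = k * Z.of_nat m)%Z).
{ pose proof (translate_iter X _ _ Hk (Z.of_nat n) 0%Z) as E1.
  pose proof (translate_iter X _ _ Hper k 0%Z) as E2.
  rewrite Z.mul_comm, E1, <- INR_IZR_INZ, Hc in E2.
  apply eq_IZR; rewrite plus_IZR, !mult_IZR, <- !INR_IZR_INZ; simpl.
  transitivity (INR n * (/ INR n + IZR q)); [field | ]; lra. }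
intros i.
replace (i + 1)%Z with (i + Z.of_nat m * k + (- q) * Z.of_nat n)%Z by lia.
rewrite (translate_iter X _ _ Hper), (translate_iter X _ _ Hk),
  opp_IZR, <- INR_IZR_INZ, Hc.
field; lra.
Qed.

Lemma reflection_uniform_step (X : Z -> R) (k z : Z) (m n : nat) c :
  Nat.gcd m n = 1%nat -> (1 <= m)%nat ->
  (forall i, X (k - i)%Z = X i + c - IZR i) ->
  (forall i, X (i + Z.of_nat n)%Z = X i + INR m) ->
  c = / INR n + IZR z ->
  forall i, X (i + 1)%Z = X i + INR m / INR n.
Proof.
intros Hgcd Hm Hk Hper Hc.
assert (Hn2m : n = (m * 2)%nat).
{ pose proof (Hk (Z.of_nat n)) as E1.
  pose proof (Hper (k - Z.of_nat n)%Z) as E2.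
  pose proof (Hper 0%Z) as E3.
  pose proof (Hk 0%Z) as E4.
  rewrite Z.sub_add in E2; rewrite Z.add_0_l in E3; rewrite Z.sub_0_r in E4.
  rewrite <- INR_IZR_INZ in E1; simpl in E4.
  apply INR_eq; rewrite mult_INR; simpl; lra. }
subst n; rewrite Nat.gcd_mul_diag_l in Hgcd; subst m.
assert (Hk_odd : k = (1 + 2 * z)%Z).
{ pose proof (Hk k) as E; rewrite Z.sub_diag in E.
  pose proof (Hk 0%Z) as E0; rewrite Z.sub_0_r in E0.
  apply eq_IZR; rewrite plus_IZR, mult_IZR; simpl in *; lra. }
intros i.
pose proof (translate_iter X _ _ Hper (z - i) (i + 1)%Z) as E.
replace (i + 1 + (z - i) * Z.of_nat (1 * 2))%Z with (k - i)%Z in E by (simpl; lia).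
rewrite Hk, minus_IZR in E; simpl in *; lra.
Qed.

Lemma Birkhoff_affine (X : Z -> R) a r :
  (forall i, X i = a + r * IZR i) -> Birkhoff X.
Proof. intros HX i j l k H; rewrite !HX, !plus_IZR in *; lra. Qed.

Lemma equivariant_shift n g :
  INR n <> 0 -> (forall x, g (x + / INR n) = Rgen n (g x)) ->
  forall k x, g (x + IZR k / INR n) = Rpow n k (g x).
Proof.
intros Hn Hr k; unfold Rpow.
induction k as [|k IH|k IH] using Z.peano_ind; intros x.
- replace (x + 0 / INR n) with x by (field; exact Hn).
  rewrite Rmult_0_l, rot_0; reflexivity.
- replace (x + IZR (Z.succ k) / INR n) with (x + IZR k / INR n + / INR n)
    by (rewrite succ_IZR; field; exact Hn).
  rewrite Hr, IH; unfold Rgen; rewrite rot_add, succ_IZR; f_equal; ring.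
- specialize (Hr (x + IZR (Z.pred k) / INR n)).
  replace (x + IZR (Z.pred k) / INR n + / INR n) with (x + IZR k / INR n) in Hr
    by (rewrite <- Z.sub_1_r, minus_IZR; field; exact Hn).
  rewrite IH in Hr; unfold Rgen in Hr.
  apply (f_equal (rot (- (2 * PI / INR n)))) in Hr.
  rewrite !rot_add, Rplus_opp_l, rot_0 in Hr.
  rewrite <- Hr, <- Z.sub_1_r, minus_IZR; f_equal; ring.
Qed.

Lemma Derive_shift (f : R -> R) c x :
  ex_derive f (x + c) -> Derive (fun s => f (s + c)) x = Derive f (x + c).
Proof.
intros Hf.
rewrite (Derive_comp f (fun s => s + c)) by (auto; auto_derive; auto).
replace (Derive (fun s => s + c) x) with 1; [ring|].
symmetry; apply is_derive_unique; auto_derive; auto; ring.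
Qed.

Lemma d1_rot_shift (h : R -> pt) c b :
  (forall s, ex_derive (fun s => fst (h s)) s) ->
  (forall s, ex_derive (fun s => snd (h s)) s) ->
  (forall s, h (s + c) = rot b (h s)) ->
  forall x, Defs.d1 h (x + c) = rot b (Defs.d1 h x).
Proof.
intros Hu Hv Hh x; unfold Defs.d1, rot; simpl.
rewrite <- !Derive_shift by auto.
rewrite (Derive_ext (fun s => fst (h (s + c)))
                    (fun s => cos b * fst (h s) + - sin b * snd (h s)))
  by (intros s; rewrite Hh; unfold rot; simpl; ring).
rewrite (Derive_ext (fun s => snd (h (s + c)))
                    (fun s => sin b * fst (h s) + cos b * snd (h s)))
  by (intros s; rewrite Hh; unfold rot; simpl; ring).
rewrite !Derive_plus, !Derive_scal by (apply ex_derive_scal; auto).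
f_equal; ring.
Qed.

(* Since d2 g = d1 (d1 g), the symmetry passes to both derivatives. *)
Lemma curv_rot_shift g c b :
  C2 (fun s => fst (g s)) -> C2 (fun s => snd (g s)) ->
  (forall s, g (s + c) = rot b (g s)) ->
  forall x, curv g (x + c) = curv g x.
Proof.
intros [Hu1 [Hu2 _]] [Hv1 [Hv2 _]] Hg x.
assert (Hd1 := d1_rot_shift g c b Hu1 Hv1 Hg).
assert (Hd2 := d1_rot_shift (Defs.d1 g) c b Hu2 Hv2 Hd1 x).
change (Defs.d1 (Defs.d1 g) x) with (Defs.d2 g x) in Hd2.
change (Defs.d1 (Defs.d1 g) (x + c)) with (Defs.d2 g (x + c)) in Hd2.
unfold curv; rewrite Hd1, Hd2, det2_rot, pnorm_rot; reflexivity.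
Qed.

Section Lift.

Variables (g : R -> pt) (Zs : Z -> pt) (X : Z -> R).
Hypothesis g_inj : forall x y, g x = g y -> exists k : Z, y = x + IZR k.
Hypothesis X_step : forall i, 0 < X (i + 1)%Z - X i < 1.
Hypothesis X_lift : forall i, g (X i) = Zs i.

Lemma lift_translate a k :
  (forall i, g (X i + a) = Zs (i + k)%Z) ->
  forall i, X (i + k)%Z = X i + (X k - X 0%Z).
Proof.
intros Hk i.
pose proof (integer_gap_const X (fun i => X (i + k)%Z - a) X_step) as Hgap.
cbv beta in Hgap; rewrite Z.add_0_l in Hgap.
enough (X (i + k)%Z - a = X i + (X k - a - X 0%Z)) by lra.
apply Hgap.
- intros j; replace (j + 1 + k)%Z with (j + k + 1)%Z by ring.
  specialize (X_step (j + k)%Z); lra.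
- intros j; destruct (g_inj (X j + a) (X (j + k)%Z)) as [z Hz].
  { rewrite Hk, X_lift; reflexivity. }
  exists z; lra.
Qed.

Lemma lift_reflect a k :
  (forall i, g (X i + a) = Zs (k - i)%Z) ->
  forall i, X (k - i)%Z = X i + (X k - X 0%Z) - IZR i.
Proof.
intros Hk i.
pose proof (integer_gap_const X (fun i => X (k - i)%Z + IZR i - a) X_step)
  as Hgap.
cbv beta in Hgap; rewrite Z.sub_0_r in Hgap.
enough (X (k - i)%Z + IZR i - a = X i + (X k + 0 - a - X 0%Z)) by lra.
apply Hgap.
- intros j; rewrite plus_IZR; simpl.
  replace (k - j)%Z with (k - (j + 1) + 1)%Z by ring.
  specialize (X_step (k - (j + 1))%Z); lra.
- intros j; destruct (g_inj (X j + a) (X (k - j)%Z)) as [z Hz].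
  { rewrite Hk, X_lift; reflexivity. }
  exists (z + j)%Z; rewrite plus_IZR; lra.
Qed.

Lemma lift_uniform_step (m n : nat) :
  Nat.gcd m n = 1%nat -> (1 <= m)%nat -> (0 < n)%nat ->
  (forall x, g (x + / INR n) = Rgen n (g x)) ->
  (forall i, Zs (i + Z.of_nat n)%Z = Zs i) ->
  rotation_number X (INR m / INR n) ->
  spatiotemporal_symmetry (Rpow n 1) Zs ->
  forall i, X (i + 1)%Z = X i + INR m / INR n.
Proof.
intros Hgcd Hm Hn Hr Hper Hrot [k Hsym].
assert (Hn' : 0 < INR n) by (apply lt_0_INR; exact Hn).
assert (Hperiod : forall i, X (i + Z.of_nat n)%Z = X i + INR m).
{ assert (HX := lift_translate 0 (Z.of_nat n)
    ltac:(intros i; rewrite Rplus_0_r, X_lift, Hper; reflexivity)).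
  pose proof (rotation_number_of_period X n _ _ Hn HX Hrot) as E.
  intros i; rewrite HX; f_equal.
  apply (Rmult_eq_reg_r (/ INR n)); [|apply Rinv_neq_0_compat; lra].
  exact (eq_sym E). }
assert (HR : forall i, Rpow n 1 (Zs i) = g (X i + / INR n)).
{ intros i; rewrite Hr, <- X_lift; unfold Rpow, Rgen; f_equal; ring. }
assert (Hoffset : exists q, X k - X 0%Z = / INR n + IZR q).
{ destruct (g_inj (X 0%Z + / INR n) (X k)) as [q Hq].
  - rewrite <- HR, X_lift; destruct Hsym as [H | H]; rewrite H; f_equal; ring.
  - exists q; lra. }
destruct Hoffset as [q Hq].
destruct Hsym as [Hf | Hb].
- apply (translation_uniform_step X k q m n (X k - X 0%Z)); auto.
  apply (lift_translate (/ INR n)).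
  intros i; rewrite <- HR, Hf, Z.add_comm; reflexivity.
- apply (reflection_uniform_step X k q m n (X k - X 0%Z)); auto.
  apply (lift_reflect (/ INR n)).
  intros i; rewrite <- HR, Hb; reflexivity.
Qed.

End Lift.

Section UniformStep.

Variables (m n : nat) (g : R -> pt) (Zs : Z -> pt) (X : Z -> R).
Hypothesis n_pos : (0 < n)%nat.
Hypothesis g_equiv : forall x, g (x + / INR n) = Rgen n (g x).
Hypothesis X_lift : forall i, g (X i) = Zs i.
Hypothesis X_uniform : forall i, X (i + 1)%Z = X i + INR m / INR n.

Let n_neq0 : INR n <> 0.
Proof. apply not_0_INR; lia. Qed.

Lemma uniform_lift_affine i : X i = X 0%Z + INR m / INR n * IZR i.
Proof.
pose proof (translate_iter X _ _ X_uniform i 0%Z) as E.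
rewrite Z.mul_1_r, Z.add_0_l in E; rewrite E; ring.
Qed.

Lemma uniform_lift_shift i :
  X i = X 0%Z + IZR (Z.of_nat m * i) / INR n.
Proof.
rewrite uniform_lift_affine, mult_IZR, <- INR_IZR_INZ; field; exact n_neq0.
Qed.

Lemma uniform_orbit_Rpow i : Zs i = Rpow n (Z.of_nat m * i) (Zs 0%Z).
Proof.
rewrite <- !X_lift, uniform_lift_shift, equivariant_shift; auto.
Qed.

Lemma uniform_orbit_step i : Zs (i + 1)%Z = Rpow n (Z.of_nat m) (Zs i).
Proof.
rewrite (uniform_orbit_Rpow (i + 1)), (uniform_orbit_Rpow i), <- Rpow_add.
f_equal; ring.
Qed.

Lemma uniform_orbit_segment i :
  pdist (Zs (i + 1)%Z) (Zs i) = pdist (Zs 1%Z) (Zs 0%Z).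
Proof.
assert (Hshift : Zs (i + 1)%Z = Rpow n (Z.of_nat m * i) (Zs 1%Z)).
{ rewrite (uniform_orbit_Rpow (i + 1)), (uniform_orbit_Rpow 1), <- Rpow_add.
  f_equal; ring. }
rewrite Hshift, (uniform_orbit_Rpow i); unfold Rpow; apply pdist_rot.
Qed.

Lemma uniform_orbit_curvature :
  billiard_curve g -> forall i, curv g (X i) = curv g (X 0%Z).
Proof.
intros [Hu [Hv _]] i; rewrite uniform_lift_shift.
apply (curv_rot_shift g _ (IZR (Z.of_nat m * i) * (2 * PI / INR n)) Hu Hv).
intros s; apply equivariant_shift; auto.
Qed.

Lemma uniform_orbit_turning_angle :
  (m < n)%nat -> forall i,
  is_ccw_angle (psub (Zs i) (Zs (i - 1)%Z)) (psub (Zs (i + 1)%Z) (Zs i))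
               (2 * (INR m * PI / INR n)).
Proof.
intros Hmn i.
assert (Hturn : psub (Zs (i + 1)%Z) (Zs i) =
                Rpow n (Z.of_nat m) (psub (Zs i) (Zs (i - 1)%Z))).
{ rewrite (uniform_orbit_step i).
  replace (Zs i) with (Zs (i - 1 + 1)%Z) at 2 by (f_equal; ring).
  rewrite (uniform_orbit_step (i - 1)); apply psub_rot. }
rewrite Hturn; unfold Rpow; rewrite <- INR_IZR_INZ.
replace (INR m * (2 * PI / INR n)) with (2 * (INR m * PI / INR n))
  by (field; exact n_neq0).
apply is_ccw_angle_rot.
assert (Hn' : 0 < INR n) by (apply lt_0_INR; exact n_pos).
assert (Hratio : 0 <= INR m / INR n < 1).
{ split; [apply Rdiv_le_0_compat; [apply pos_INR | exact Hn']|].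
  apply (Rmult_lt_reg_r (INR n)); [exact Hn'|].
  unfold Rdiv; rewrite Rmult_assoc, Rinv_l, Rmult_1_r, Rmult_1_l by lra.
  apply lt_INR; exact Hmn. }
pose proof PI_RGT_0.
replace (INR m * PI / INR n) with (PI * (INR m / INR n)) by (field; lra).
split; nra.
Qed.

End UniformStep.

Theorem mainTheorem14 (m n : nat) (g : R -> pt) (Zs : Z -> pt) (X : Z -> R) :
  Nat.gcd m n = 1%nat -> (1 <= m)%nat -> (m <= n - 1)%nat ->
  billiard_curve g -> Dn_equivariant n g ->
  billiard_seq_lift g Zs X ->
  (forall i, Zs (i + Z.of_nat n)%Z = Zs i) ->
  rotation_number X (INR m / INR n) ->
  (forall k : Z, spatiotemporal_symmetry (Rpow n k) Zs) ->
  (Birkhoff X /\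
   (forall i, Zs i = Rpow n (Z.of_nat m * i)%Z (Zs 0%Z)) /\
   (forall i, X i = X 0%Z + INR m / INR n * IZR i)) /\
  ((forall i, pdist (Zs (i + 1)%Z) (Zs i) = pdist (Zs 1%Z) (Zs 0%Z)) /\
   (forall i, curv g (X i) = curv g (X 0%Z))) /\
  (billiard_orbit g Zs X ->
   forall i, is_ccw_angle (psub (Zs i) (Zs (i - 1)%Z))
                          (psub (Zs (i + 1)%Z) (Zs i))
                          (2 * (INR m * PI / INR n))).
Proof.
intros Hgcd Hm Hmn Hb [Hr _] [_ [Hstep Hlift]] Hper Hrot Hsym.
assert (Hn : (0 < n)%nat) by lia.
assert (g_inj : forall x y, g x = g y -> exists k : Z, y = x + IZR k)
  by (destruct Hb as [_ [_ [_ [_ [H _]]]]]; exact H).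
assert (Huniform := lift_uniform_step g Zs X g_inj Hstep Hlift m n
                      Hgcd Hm Hn Hr Hper Hrot (Hsym 1%Z)).
split; [split; [|split] | split; [split|]].
- exact (Birkhoff_affine X _ _ (uniform_lift_affine m n X Huniform)).
- exact (uniform_orbit_Rpow m n g Zs X Hn Hr Hlift Huniform).
- exact (uniform_lift_affine m n X Huniform).
- exact (uniform_orbit_segment m n g Zs X Hn Hr Hlift Huniform).
- exact (uniform_orbit_curvature m n g X Hn Hr Huniform Hb).
- intros _; apply (uniform_orbit_turning_angle m n g Zs X Hn Hr Hlift Huniform).
  lia.
Qed.
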